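(* Let $\bar\gamma\in(0,2\pi)$ be fixed and, for each integer $\rho\ge1$, let $\tau_\rho\in(0,\pi)$ be the solution of $$\frac{\tau-\bar\gamma/2}{2\rho-1}-\tan^{-1}\!\Big(\frac{\sin\tau}{2\rho-\cos\tau}\Big)=0,$$ and set $\bar t_\rho=\frac{4\rho\tau_\rho-\bar\gamma}{2\rho-1}$ (this is the minimum transfer time to $(\gamma,0,\gamma)$ with $\gamma=\bar\gamma+2(\rho-1)\pi$, minus $2(\rho-1)\pi$). Then as $\rho\to\infty$, $\tau_\rho\to\tau_\infty$, where $\tau_\infty$ is the solution of $\tau-\sin\tau-\bar\gamma/2=0$, and $\bar t_\rho\to 2\tau_\infty$.
   Context: $\tan^{-1}$ takes values in $(-\pi/2,\pi/2)$. *)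

From Stdlib Require Import Reals Lra.
Open Scope R_scope.

Definition tau_eq (gbar : R) (rho : nat) (tau : R) : Prop :=
  (tau - gbar / 2) / (2 * INR rho - 1)
  - atan (sin tau / (2 * INR rho - cos tau)) = 0.

Definition tbar (gbar : R) (rho : nat) (tau : R) : R :=
  (4 * INR rho * tau - gbar) / (2 * INR rho - 1).

From Stdlib Require Import Reals Lra Lia.
Open Scope R_scope.

(* Write n = 2 rho - 1.  The defining equation says
   tau - gbar/2 = n * atan x  with  x = sin tau / (n + 1 - cos tau),  |x| <= 1/n.
   Since atan x = x + O(x^3), replacing atan x by x changes the right-hand side
   by O(1/n^2) * n, and replacing x by sin tau / n changes it by O(1/n); hence
   the Kepler-type residual  tau - sin tau - gbar/2  of tau_rho is O(1/rho).
   As  t |-> t - sin t  is strictly increasing, a sequence whose residual tends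
   to 0 must tend to the unique zero tau_inf of the residual.  Finally
     tbar_rho = 2 tau_rho + (2 tau_rho - gbar)/(2 rho - 1),
   and the last term is O(1/rho) because 0 < tau_rho < PI and 0 < gbar < 2 PI. *)

(* Cubic remainder of atan on the positive axis, by the mean value theorem
   applied with atan' c = 1 / (1 + c^2). *)
Lemma atan_sub_id_pos (x : R) : 0 < x -> Rabs (atan x - x) <= x ^ 3.
Proof.
  intros Hx.
  destruct (MVT_cor2 atan (fun c => / (1 + c ^ 2)) 0 x Hx) as [c [Hmvt Hc]].
  { intros c _. apply derivable_pt_lim_atan. }
  rewrite atan_0 in Hmvt.
  set (u := / (1 + c ^ 2)) in *.
  assert (Hu : u * (1 + c ^ 2) = 1) by (unfold u; field; nra).
  assert (Hu_pos : 0 < u) by (unfold u; apply Rinv_0_lt_compat; nra).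
  assert (Hdiff : atan x - x = - (x * c ^ 2 * u)) by nra.
  rewrite Hdiff, Rabs_Ropp, Rabs_right by (apply Rle_ge, Rmult_le_pos; nra).
  assert (c ^ 2 * u <= c ^ 2) by nra.
  assert (c ^ 2 <= x ^ 2) by nra.
  nra.
Qed.

(* |atan x - x| <= |x|^3 on the whole line, by oddness of atan. *)
Lemma atan_sub_id (x : R) : Rabs (atan x - x) <= Rabs x ^ 3.
Proof.
  destruct (Rtotal_order x 0) as [Hneg | [-> | Hpos]].
  - pose proof (atan_sub_id_pos (- x) ltac:(lra)) as B.
    rewrite atan_opp in B.
    replace (- atan x - - x) with (- (atan x - x)) in B by ring.
    rewrite Rabs_Ropp in B. rewrite (Rabs_left x) by lra. exact B.
  - rewrite atan_0, Rminus_0_r, Rabs_R0. simpl. lra.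
  - rewrite (Rabs_right x) by lra. now apply atan_sub_id_pos.
Qed.

Lemma residual_bound (g n t : R) : 1 <= n ->
  (t - g / 2) / n - atan (sin t / (n + 1 - cos t)) = 0 ->
  Rabs (t - sin t - g / 2) <= 3 / n.
Proof.
  intros Hn Heq.
  pose proof (COS_bound t) as Hcos. pose proof (SIN_bound t) as Hsin.
  set (D := n + 1 - cos t) in *.
  assert (HD : n <= D) by (unfold D; lra).
  assert (HinvD : 0 < / D <= / n)
    by (split; [apply Rinv_0_lt_compat | apply Rinv_le_contravar]; lra).
  assert (Hinvn : 0 < / n <= 1).
  { split; [apply Rinv_0_lt_compat; lra|].
    rewrite <- Rinv_1. apply Rinv_le_contravar; lra. }
  set (x := sin t / D) in *.
  assert (Hx : Rabs x <= / n).
  { unfold x, Rdiv. rewrite Rabs_mult, Rabs_inv, (Rabs_right D) by lra.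
    assert (Rabs (sin t) <= 1) by (apply Rabs_le; lra).
    pose proof (Rabs_pos (sin t)). nra. }
  assert (Ht : t - g / 2 = n * atan x).
  { replace (t - g / 2) with (n * ((t - g / 2) / n)) by (field; lra).
    f_equal. lra. }
  (* n * x = sin t + sin t * (cos t - 1) / D: split the residual accordingly. *)
  assert (Hsplit : t - sin t - g / 2 = n * (atan x - x) + sin t * (cos t - 1) / D).
  { replace (t - sin t - g / 2) with (n * atan x - sin t) by lra.
    unfold x, D. field. unfold D in HD; lra. }
  assert (Hcubic : Rabs (n * (atan x - x)) <= 1 / n).
  { rewrite Rabs_mult, (Rabs_right n) by lra.
    pose proof (atan_sub_id x) as A.
    assert (Rabs x ^ 3 <= / n ^ 3).
    { rewrite <- pow_inv. apply pow_incr. split; [apply Rabs_pos | exact Hx]. }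
    apply Rle_trans with (n * / n ^ 3); [apply Rmult_le_compat_l; lra|].
    replace (n * / n ^ 3) with (/ n * / n) by (field; lra).
    unfold Rdiv. rewrite Rmult_1_l. nra. }
  assert (Hrest : Rabs (sin t * (cos t - 1) / D) <= 2 / n).
  { unfold Rdiv. rewrite !Rabs_mult, Rabs_inv, (Rabs_right D) by lra.
    assert (Rabs (sin t) <= 1) by (apply Rabs_le; lra).
    assert (Rabs (cos t - 1) <= 2) by (apply Rabs_le; lra).
    pose proof (Rabs_pos (sin t)). pose proof (Rabs_pos (cos t - 1)).
    assert (Rabs (sin t) * Rabs (cos t - 1) <= 2) by nra.
    nra. }
  rewrite Hsplit.
  eapply Rle_trans; [apply Rabs_triang|].
  replace (3 / n) with (1 / n + 2 / n) by (field; lra). lra.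
Qed.

Lemma Rabs_sin_lt (h : R) : 0 < h -> Rabs (sin h) < h.
Proof.
  intros Hh. pose proof (sin_lt_x h Hh). pose proof (SIN_bound h). pose proof PI2_1.
  apply Rabs_def1; [lra|].
  destruct (Rle_or_lt h PI) as [HhPI | HhPI].
  - pose proof (sin_ge_0 h ltac:(lra) HhPI). lra.
  - lra.
Qed.

(* t |-> t - sin t is strictly increasing:
   sin b - sin a = 2 cos((a+b)/2) sin((b-a)/2) and |sin h| < h for h > 0. *)
Lemma sub_sin_strict_incr (a b : R) : a < b -> a - sin a < b - sin b.
Proof.
  intros Hab.
  pose proof (form3 b (- a)) as Hsum. rewrite sin_neg in Hsum.
  replace ((b - - a) / 2) with ((b + a) / 2) in Hsum by field.
  replace ((b + - a) / 2) with ((b - a) / 2) in Hsum by field.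
  pose proof (Rabs_sin_lt ((b - a) / 2) ltac:(lra)) as Hs.
  pose proof (COS_bound ((b + a) / 2)) as Hc.
  assert (Hprod : Rabs (cos ((b + a) / 2) * sin ((b - a) / 2)) < (b - a) / 2).
  { rewrite Rabs_mult.
    assert (Rabs (cos ((b + a) / 2)) <= 1) by (apply Rabs_le; lra).
    pose proof (Rabs_pos (cos ((b + a) / 2))). pose proof (Rabs_pos (sin ((b - a) / 2))).
    nra. }
  pose proof (Rle_abs (cos ((b + a) / 2) * sin ((b - a) / 2))). lra.
Qed.

Lemma Un_cv_of_residual (f : R -> R) (u : nat -> R) (l : R) :
  (forall a b, a < b -> f a < f b) -> f l = 0 ->
  Un_cv (fun n => f (u n)) 0 -> Un_cv u l.
Proof.
  intros Hmono Hl Hres eps Heps.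
  pose proof (Hmono l (l + eps) ltac:(lra)) as Hup.
  pose proof (Hmono (l - eps) l ltac:(lra)) as Hdown.
  set (d := Rmin (f (l + eps)) (- f (l - eps))).
  assert (Hd : 0 < d) by (unfold d; apply Rmin_glb_lt; lra).
  destruct (Hres d Hd) as [N HN].
  exists N. intros n Hn. specialize (HN n Hn).
  unfold R_dist in *. rewrite Rminus_0_r in HN.
  assert (Hd_up : d <= f (l + eps)) by apply Rmin_l.
  assert (Hd_down : d <= - f (l - eps)) by apply Rmin_r.
  apply Rabs_def1.
  - destruct (Rlt_or_le (u n - l) eps) as [Hlt | Hge]; [exact Hlt | exfalso].
    assert (f (l + eps) <= f (u n)).
    { destruct (Req_dec (l + eps) (u n)) as [<- | Hne]; [lra|].
      left. apply Hmono. lra. }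
    pose proof (Rle_abs (f (u n))). lra.
  - destruct (Rlt_or_le (- eps) (u n - l)) as [Hlt | Hge]; [exact Hlt | exfalso].
    assert (f (u n) <= f (l - eps)).
    { destruct (Req_dec (u n) (l - eps)) as [-> | Hne]; [lra|].
      left. apply Hmono. lra. }
    pose proof (Rle_abs (- f (u n))) as Habs. rewrite Rabs_Ropp in Habs.
    lra.
Qed.

Lemma Un_cv_of_harmonic_bound (v : nat -> R) (C : R) :
  (forall k, (1 <= k)%nat -> Rabs (v k) <= C / INR k) -> Un_cv v 0.
Proof.
  intros Hv eps Heps.
  destruct (INR_unbounded (C / eps)) as [N HN].
  exists (S N). intros k Hk. unfold R_dist. rewrite Rminus_0_r.
  assert (HNk : INR N <= INR k) by (apply le_INR; lia).
  assert (Hk1 : 1 <= INR k) by (apply (le_INR 1); lia).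
  assert (HC : C < eps * INR k).
  { replace C with (C / eps * eps) by (field; lra). nra. }
  eapply Rle_lt_trans; [apply (Hv k ltac:(lia))|].
  replace eps with (eps * INR k / INR k) by (field; lra).
  unfold Rdiv. apply Rmult_lt_compat_r; [apply Rinv_0_lt_compat|]; lra.
Qed.

Lemma div_odd_le (a : R) (k : nat) : (1 <= k)%nat -> 0 <= a ->
  a / (2 * INR k - 1) <= a / INR k.
Proof.
  intros Hk Ha. assert (1 <= INR k) by (apply (le_INR 1); lia).
  apply Rmult_le_compat_l; [exact Ha|]. apply Rinv_le_contravar; lra.
Qed.

Lemma tau_residual_bound (gbar t : R) (rho : nat) : (1 <= rho)%nat ->
  tau_eq gbar rho t -> Rabs (t - sin t - gbar / 2) <= 3 / INR rho.
Proof.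
  intros Hrho Heq. assert (1 <= INR rho) by (apply (le_INR 1); lia).
  eapply Rle_trans; [apply (residual_bound gbar (2 * INR rho - 1))|]; [lra| |].
  - unfold tau_eq in Heq.
    replace (2 * INR rho - 1 + 1) with (2 * INR rho) by ring. exact Heq.
  - apply div_odd_le; [exact Hrho | lra].
Qed.

Lemma tbar_decomposition (gbar t : R) (rho : nat) :
  tbar gbar rho t = 2 * t + (2 * t - gbar) / (2 * INR rho - 1).
Proof.
  unfold tbar.
  assert (Hodd : 2 * INR rho - 1 <> 0).
  { destruct rho as [|k]; [simpl; lra|].
    assert (1 <= INR (S k)) by (apply (le_INR 1); lia). lra. }
  field. exact Hodd.
Qed.

Lemma Un_cv_const (c : R) : Un_cv (fun _ => c) c.
Proof.
  intros eps Heps. exists 0%nat. intros n _.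
  unfold R_dist. rewrite Rminus_diag, Rabs_R0. exact Heps.
Qed.

Theorem mainTheorem9 (gbar : R) (tau : nat -> R) (tau_inf : R) :
  0 < gbar < 2 * PI ->
  (forall rho : nat, (1 <= rho)%nat ->
     0 < tau rho < PI /\ tau_eq gbar rho (tau rho)) ->
  tau_inf - sin tau_inf - gbar / 2 = 0 ->
  Un_cv tau tau_inf /\
  Un_cv (fun rho => tbar gbar rho (tau rho)) (2 * tau_inf).
Proof.
  intros Hg Htau Hinf.
  assert (Hcv : Un_cv tau tau_inf).
  { apply (Un_cv_of_residual (fun t => t - sin t - gbar / 2)); [|exact Hinf|].
    - intros a b Hab. pose proof (sub_sin_strict_incr a b Hab). lra.
    - apply (Un_cv_of_harmonic_bound _ 3). intros k Hk.
      apply tau_residual_bound; [exact Hk | apply Htau, Hk]. }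
  split; [exact Hcv|].
  (* The correction term is at most 2 PI / (2 rho - 1) <= 2 PI / rho. *)
  assert (Hcorr : Un_cv (fun k => (2 * tau k - gbar) / (2 * INR k - 1)) 0).
  { apply (Un_cv_of_harmonic_bound _ (2 * PI)). intros k Hk.
    destruct (Htau k Hk) as [Hbounds _].
    assert (1 <= INR k) by (apply (le_INR 1); lia).
    pose proof PI_RGT_0.
    apply Rle_trans with (2 * PI / (2 * INR k - 1)); [|apply div_odd_le; [exact Hk | lra]].
    unfold Rdiv. rewrite Rabs_mult, (Rabs_right (/ _)) by (apply Rle_ge, Rlt_le, Rinv_0_lt_compat; lra).
    apply Rmult_le_compat_r; [apply Rlt_le, Rinv_0_lt_compat; lra|].
    apply Rabs_le. lra. }
  apply (Un_cv_ext (fun k => 2 * tau k + (2 * tau k - gbar) / (2 * INR k - 1))).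
  - intros k. symmetry. apply tbar_decomposition.
  - rewrite <- (Rplus_0_r (2 * tau_inf)).
    apply CV_plus; [apply CV_mult; [apply Un_cv_const | exact Hcv] | exact Hcorr].
Qed.
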